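(* Let $(G,\theta)$ be a $p$-oriented profinite group satisfying formal Hilbert 90. Then for every open subgroup $H\subset G$ and every $n\geq1$, the maps $Z^1(H,S[p^n])\to Z^1(H,S[p^{n-1}])$ and $H^1(H,S[p^n])\to H^1(H,S[p^{n-1}])$ induced by the $G$-module homomorphism $S[p^n]\to S[p^{n-1}]$, $x\mapsto px$, are surjective.
   Context: A $p$-oriented profinite group is a pair $(G,\theta)$ with $G$ profinite and $\theta\colon G\to\mathbb Z_p^\times$ a continuous homomorphism. $\mathbb Z/p^n\mathbb Z(1)$ is $\mathbb Z/p^n\mathbb Z$ with $g\cdot v=\theta(g)v$. $(G,\theta)$ satisfies formal Hilbert 90 if for every open subgroup $H\subset G$ and every $n\geq1$ the reduction map $H^1(H,\mathbb Z/p^n\mathbb Z(1))\to H^1(H,\mathbb Z/p\mathbb Z(1))$ is surjective. $S$ is the discrete $G$-module $\mathbb Q/\mathbb Z_{(p)}$ with $g$ acting by multiplication by $\theta(g)$; $S[p^n]$ is its $p^n$-torsion (isomorphic to $\mathbb Z/p^n\mathbb Z(1)$). $Z^1$ denotes continuous 1-cocycles. *)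

From HB Require Import structures.
From mathcomp Require Import all_boot all_order all_algebra.
From mathcomp Require Import all_classical all_reals all_analysis.
Set Implicit Arguments. Unset Strict Implicit. Unset Printing Implicit Defensive.
Import Order.TTheory GRing.Theory Num.Theory.
Local Open Scope classical_set_scope.
Local Open Scope ring_scope.

Record profinite_group := ProfiniteGroup {
  pg_car :> topologicalType;
  pg_mul : pg_car -> pg_car -> pg_car;
  pg_inv : pg_car -> pg_car;
  pg_one : pg_car;
  pg_mulA : forall x y z, pg_mul x (pg_mul y z) = pg_mul (pg_mul x y) z;
  pg_mul1g : forall x, pg_mul pg_one x = x;
  pg_mulg1 : forall x, pg_mul x pg_one = x;
  pg_mulVg : forall x, pg_mul (pg_inv x) x = pg_one;
  pg_mulgV : forall x, pg_mul x (pg_inv x) = pg_one;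
  pg_mul_cont : continuous (fun xy : pg_car * pg_car => pg_mul xy.1 xy.2);
  pg_inv_cont : continuous pg_inv;
  pg_compact : compact [set: pg_car];
  pg_hausdorff : hausdorff_space pg_car;
  pg_totdisc : totally_disconnected [set: pg_car]
}.

Definition open_subgroup (G : profinite_group) (H : set G) : Prop :=
  [/\ open H, H (pg_one G),
      (forall x y, H x -> H y -> H (pg_mul x y)) &
      (forall x, H x -> H (pg_inv x))].

(* Z_p as the inverse limit of the Z/p^n Z: an element is a sequence   *)
(* a : nat -> nat with a n < p^n and a (n+1) = a n mod p^n.            *)
(* A p-orientation theta : G -> Z_p^x is a continuous homomorphism:    *)
(* continuity for the inverse-limit topology means every coordinate    *)
(* g |-> theta g n is locally constant.                                *)
Definition is_Zp (p : nat) (a : nat -> nat) : Prop :=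
  forall n, (a n < p ^ n)%N /\ (a n.+1 %% p ^ n = a n)%N.

Definition is_Zp_unit (p : nat) (a : nat -> nat) : Prop :=
  is_Zp p a /\ coprime (a 1%N) p.

Definition p_orientation (p : nat) (G : profinite_group)
    (theta : G -> nat -> nat) : Prop :=
  [/\ forall g, is_Zp_unit p (theta g),
      forall g h n, theta (pg_mul g h) n = (theta g n * theta h n %% p ^ n)%N
    &
      forall n g, exists U : set G, [/\ open U, U g &
                    forall x, U x -> theta x n = theta g n]].

(* Local constancy (= continuity into a discrete module) of a function
   on the subgroup H, for a given equivalence on the values. *)
Definition loc_const_on (G : profinite_group) (H : set G) (T : Type)
    (eqv : T -> T -> Prop) (f : G -> T) : Prop :=
  forall g, H g -> exists U : set G, [/\ open U, U g &
     forall x, U x -> H x -> eqv (f x) (f g)].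

(* Z/p^n Z(1): values are integers taken modulo p^n, g acts by theta g *)
Definition eqmod (m : nat) (a b : int) : Prop := (a == b %[mod m%:Z])%Z.

Definition Z1_mod (p : nat) (G : profinite_group) (theta : G -> nat -> nat)
    (H : set G) (n : nat) (c : G -> int) : Prop :=
  loc_const_on H (eqmod (p ^ n)) c /\
  forall g h, H g -> H h ->
    eqmod (p ^ n) (c (pg_mul g h)) (c g + (theta g n)%:Z * c h).

(* formal Hilbert 90: for every open H and n >= 1,
   H^1(H, Z/p^n(1)) -> H^1(H, Z/p(1)) (induced by reduction mod p)
   is surjective. *)
Definition formal_hilbert90 (p : nat) (G : profinite_group)
    (theta : G -> nat -> nat) : Prop :=
  forall (H : set G) (n : nat), open_subgroup H -> (1 <= n)%N ->
  forall c, Z1_mod p theta H 1 c ->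
  exists c', Z1_mod p theta H n c' /\
    exists b : int, forall g, H g ->
      eqmod p (c' g) (c g + ((theta g 1%N)%:Z * b - b)).

(* S = Q/Z_(p) with g acting by theta g.  Elements of S are rationals  *)
(* with p-power denominator, taken modulo Z.  S[p^n] is its p^n-torsion*)
(* on which theta g acts through its image theta g n in Z/p^n.         *)
Definition eqS (x y : rat) : Prop := (x - y) \is a Num.int.

Definition in_S_tors (p n : nat) (x : rat) : Prop :=
  ((p ^ n)%:R * x) \is a Num.int.

Definition Z1_S (p : nat) (G : profinite_group) (theta : G -> nat -> nat)
    (H : set G) (n : nat) (c : G -> rat) : Prop :=
  [/\ forall g, H g -> in_S_tors p n (c g),
      loc_const_on H eqS c &
      forall g h, H g -> H h ->
        eqS (c (pg_mul g h)) (c g + (theta g n)%:R * c h)].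

From HB Require Import structures.
From mathcomp Require Import all_boot all_order all_algebra.
From mathcomp Require Import all_classical all_reals all_analysis.
From mathcomp Require Import ring.
Set Implicit Arguments. Unset Strict Implicit.
Import Order.TTheory GRing.Theory Num.Theory.
Local Open Scope classical_set_scope.
Local Open Scope ring_scope.

(* Writing a cochain of S[p^N] as u/p^N with u integer valued identifies
   Z^1(H, S[p^N]) with integral cochains u that are locally constant mod p^N
   and whose cocycle defect  u(gh) - u(g) - theta(g) u(h)  is divisible by
   p^N (lemma Z1_S_frac); multiplication by p becomes reduction mod p^(N-1).
   So it suffices to lift an integral cocycle a mod p^m to one mod p^(m+1).
   Replacing a by its residues r mod p^m, the defect of r at level m+1 is
   p^m Z for an integral 2-cochain Z, and a lift is r - p^m b as soon as the
   defect of b at level 1 is Z mod p.  Such a b is produced by a descent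
   (defect_descent): if the level-(k+1) defect of u is p^k Z mod p^(k+1),
   then u is a cocycle mod p, formal Hilbert 90 lifts it to a cocycle v mod
   p^(k+1) up to a coboundary, and (u - v + coboundary)/p has level-k defect
   p^(k-1) Z; after k steps we reach level 1.  Surjectivity on H^1 follows
   from surjectivity on Z^1 with the trivial coboundary. *)

Lemma eqmodE (P : nat) (x y : int) : eqmod P x y = (P%:Z %| x - y)%Z.
Proof. by rewrite /eqmod eqz_mod_dvd. Qed.

Lemma eqmod_refl (P : nat) (x : int) : eqmod P x x.
Proof. exact: eqxx. Qed.

Lemma eqmodD (P : nat) (x x' y y' : int) :
  eqmod P x x' -> eqmod P y y' -> eqmod P (x + y) (x' + y').
Proof.
rewrite !eqmodE => dx dy.
have -> : x + y - (x' + y') = (x - x') + (y - y') by ring.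
exact: rpredD.
Qed.

Lemma eqmodB (P : nat) (x x' y y' : int) :
  eqmod P x x' -> eqmod P y y' -> eqmod P (x - y) (x' - y').
Proof.
rewrite !eqmodE => dx dy.
have -> : x - y - (x' - y') = (x - x') - (y - y') by ring.
exact: rpredB.
Qed.

Lemma eqmod_scale (d Q : nat) (x y : int) : (0 < d)%N ->
  eqmod (d * Q) (d%:Z * x) (d%:Z * y) = eqmod Q x y.
Proof.
move=> d_gt0; rewrite !eqmodE -mulrBr PoszM dvdz_mul2l //.
by rewrite eqz_nat -lt0n.
Qed.

Lemma dvdz_pexp (p k N : nat) : (k <= N)%N -> ((p ^ k)%:Z %| (p ^ N)%:Z)%Z.
Proof. by move=> le_kN; rewrite dvdzE /=; apply: dvdn_exp2l. Qed.

Lemma dvdz_pexpW (p k N : nat) (x : int) :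
  (k <= N)%N -> ((p ^ N)%:Z %| x)%Z -> ((p ^ k)%:Z %| x)%Z.
Proof. by move=> le_kN; apply: dvdz_trans; apply: dvdz_pexp. Qed.

Lemma eqS_frac (P : nat) (i j : int) : (0 < P)%N ->
  eqS (i%:~R / P%:R) (j%:~R / P%:R) <-> eqmod P i j.
Proof.
move=> P_gt0; have P_neq0 : (P%:R : rat) != 0 by rewrite pnatr_eq0 -lt0n.
rewrite eqmodE /eqS.
have -> : (i%:~R / P%:R - j%:~R / P%:R : rat) = (i - j)%:~R / (P%:Z)%:~R.
  by rewrite rmorphB /= mulrBl.
split; last exact: Qint_dvdz.
set x := (_ / _) => x_int.
have -> : i - j = numq x * P%:Z.
  by apply: (@intr_inj rat); rewrite rmorphM /= numqK // /x mulrVK // unitfE.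
exact: dvdz_mull.
Qed.

Lemma S_tors_frac (p N : nat) (x : rat) : (0 < p)%N -> in_S_tors p N x ->
  x = (numq ((p ^ N)%:R * x))%:~R / (p ^ N)%:R.
Proof.
move=> p_gt0 x_tors; rewrite numqK // mulrC mulKf //.
by rewrite pnatr_eq0 -lt0n expn_gt0 p_gt0.
Qed.

Definition residue (T : Type) (P : nat) (a : T -> int) (g : T) : int :=
  (a g %% P%:Z)%Z.

Lemma residue_cong (T : Type) (P : nat) (a : T -> int) (g : T) :
  (P%:Z %| residue P a g - a g)%Z.
Proof. by rewrite /residue -eqz_mod_dvd modz_mod. Qed.

Section LocallyConstant.
Variables (G : profinite_group) (H : set G).

Lemma loc_const_impl (T1 T2 : Type) (e1 : T1 -> T1 -> Prop)
    (e2 : T2 -> T2 -> Prop) (f1 : G -> T1) (f2 : G -> T2) :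
  (forall x y, H x -> H y -> e1 (f1 x) (f1 y) -> e2 (f2 x) (f2 y)) ->
  loc_const_on H e1 f1 -> loc_const_on H e2 f2.
Proof.
move=> e12 lc1 g Hg; have [U [oU Ug hU]] := lc1 g Hg.
by exists U; split=> // x Ux Hx; apply: e12 => //; exact: hU.
Qed.

Lemma loc_const2 (P : nat) (op : int -> int -> int) (u v : G -> int) :
  (forall x x' y y', eqmod P x x' -> eqmod P y y' ->
     eqmod P (op x y) (op x' y')) ->
  loc_const_on H (eqmod P) u -> loc_const_on H (eqmod P) v ->
  loc_const_on H (eqmod P) (fun g => op (u g) (v g)).
Proof.
move=> opP lu lv g Hg.
have [U [oU Ug hU]] := lu g Hg; have [V [oV Vg hV]] := lv g Hg.
exists (U `&` V); split; [exact: openI | by split |].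
by move=> x [Ux Vx] Hx; apply: opP; [exact: hU | exact: hV].
Qed.

Lemma residue_loc_const (P Q : nat) (a : G -> int) :
  loc_const_on H (eqmod P) a -> loc_const_on H (eqmod Q) (residue P a).
Proof.
move=> la; apply: loc_const_impl la => x y _ _ /eqP res_xy.
by rewrite /residue res_xy; exact: eqmod_refl.
Qed.

End LocallyConstant.

Lemma Z1_S_frac (p : nat) (G : profinite_group) (theta : G -> nat -> nat)
    (H : set G) (N : nat) (a : G -> int) (c : G -> rat) :
  (0 < p)%N -> (forall x y, H x -> H y -> H (pg_mul x y)) ->
  (forall g, H g -> c g = (a g)%:~R / (p ^ N)%:R) ->
  Z1_S p theta H N c <-> Z1_mod p theta H N a.
Proof.
move=> p_gt0 H_mul c_a; have P_gt0 : (0 < p ^ N)%N by rewrite expn_gt0 p_gt0.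
have c_eqS x y : H x -> H y -> eqS (c x) (c y) <-> eqmod (p ^ N) (a x) (a y).
  by move=> Hx Hy; rewrite !c_a //; exact: eqS_frac.
have c_cocycle g h : H g -> H h ->
    eqS (c (pg_mul g h)) (c g + (theta g N)%:R * c h) <->
    eqmod (p ^ N) (a (pg_mul g h)) (a g + (theta g N)%:Z * a h).
  move=> Hg Hh; have Hgh := H_mul g h Hg Hh; rewrite !c_a //.
  have -> : (a g)%:~R / (p ^ N)%:R + (theta g N)%:R * ((a h)%:~R / (p ^ N)%:R)
      = (a g + (theta g N)%:Z * a h)%:~R / (p ^ N)%:R :> rat.
    by rewrite intrD intrM mulrDl mulrA.
  exact: eqS_frac.
split.
  case=> _ lc cc; split; first by apply: loc_const_impl lc => x y Hx Hy /c_eqS; apply.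
  by move=> g h Hg Hh; apply/c_cocycle => //; exact: cc.
case=> la ca; split.
- move=> g Hg; rewrite /in_S_tors c_a // mulrC divfK //.
  by rewrite pnatr_eq0 -lt0n.
- by apply: loc_const_impl la => x y Hx Hy /c_eqS; apply.
- by move=> g h Hg Hh; apply/c_cocycle => //; exact: ca.
Qed.

Section CocycleDefect.
Variables (p : nat) (G : profinite_group) (theta : G -> nat -> nat).
Hypothesis theta_or : p_orientation p theta.

Definition cocycle_defect (N : nat) (u : G -> int) (g h : G) : int :=
  u (pg_mul g h) - (u g + (theta g N)%:Z * u h).

Definition coboundary (N : nat) (b : int) (g : G) : int :=
  (theta g N)%:Z * b - b.

Lemma Z1_modE (H : set G) (N : nat) (u : G -> int) :
  Z1_mod p theta H N u <-> loc_const_on H (eqmod (p ^ N)) u /\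
    forall g h, H g -> H h -> ((p ^ N)%:Z %| cocycle_defect N u g h)%Z.
Proof.
split=> -[lu du]; split=> // g h Hg Hh; first by rewrite -eqmodE; exact: du.
by rewrite eqmodE; exact: du.
Qed.

Lemma theta_cong (g : G) (k N : nat) : (k <= N)%N ->
  ((p ^ k)%:Z %| (theta g N)%:Z - (theta g k)%:Z)%Z.
Proof.
have [theta_Zp _ _] := theta_or.
move=> le_kN; rewrite -eqz_mod_dvd !modz_nat; apply/eqP; congr Posz.
elim: N le_kN => [|N IHN]; rewrite leq_eqVlt => /orP[/eqP-> // | //].
rewrite ltnS => le_kN.
by rewrite -(modn_dvdm _ (dvdn_exp2l p le_kN)) ((theta_Zp g).1 N).2; exact: IHN.
Qed.

Lemma theta_hom (g h : G) (N : nat) :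
  ((p ^ N)%:Z %| (theta g N)%:Z * (theta h N)%:Z - (theta (pg_mul g h) N)%:Z)%Z.
Proof.
have [_ theta_mul _] := theta_or.
by rewrite theta_mul -PoszM -eqz_mod_dvd !modz_nat modn_mod.
Qed.

Lemma defectD (N : nat) (u v : G -> int) (g h : G) :
  cocycle_defect N (fun x => u x + v x) g h =
  cocycle_defect N u g h + cocycle_defect N v g h.
Proof. by rewrite /cocycle_defect; ring. Qed.

Lemma defectB (N : nat) (u v : G -> int) (g h : G) :
  cocycle_defect N (fun x => u x - v x) g h =
  cocycle_defect N u g h - cocycle_defect N v g h.
Proof. by rewrite /cocycle_defect; ring. Qed.

Lemma defectMl (N : nat) (d : int) (u : G -> int) (g h : G) :
  cocycle_defect N (fun x => d * u x) g h = d * cocycle_defect N u g h.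
Proof. by rewrite /cocycle_defect; ring. Qed.

Lemma defect_level (N k : nat) (u : G -> int) (g h : G) : (k <= N)%N ->
  ((p ^ k)%:Z %| cocycle_defect N u g h - cocycle_defect k u g h)%Z.
Proof.
move=> le_kN.
have -> : cocycle_defect N u g h - cocycle_defect k u g h =
    - (((theta g N)%:Z - (theta g k)%:Z) * u h) by rewrite /cocycle_defect; ring.
by rewrite rpredN; apply: dvdz_mulr; exact: theta_cong.
Qed.

Lemma defect_coboundary (N : nat) (b : int) (g h : G) :
  ((p ^ N)%:Z %| cocycle_defect N (coboundary N b) g h)%Z.
Proof.
have -> : cocycle_defect N (coboundary N b) g h =
    - (((theta g N)%:Z * (theta h N)%:Z - (theta (pg_mul g h) N)%:Z) * b).
  by rewrite /cocycle_defect /coboundary; ring.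
by rewrite rpredN; apply: dvdz_mulr; exact: theta_hom.
Qed.

Lemma dvdz_defect (N : nat) (P : int) (u : G -> int) (g h : G) :
  (P %| u g)%Z -> (P %| u h)%Z -> (P %| u (pg_mul g h))%Z ->
  (P %| cocycle_defect N u g h)%Z.
Proof.
move=> dg dh dgh; apply: rpredB => //.
by apply: rpredD => //; exact: dvdz_mull.
Qed.

Lemma residue_defect (H : set G) (m : nat) (a : G -> int) (g h : G) :
  (forall g h, H g -> H h -> ((p ^ m)%:Z %| cocycle_defect m a g h)%Z) ->
  H g -> H h -> ((p ^ m)%:Z %| cocycle_defect m.+1 (residue (p ^ m) a) g h)%Z.
Proof.
move=> da Hg Hh; set r := residue (p ^ m) a.
have -> : cocycle_defect m.+1 r g h =
    (cocycle_defect m.+1 r g h - cocycle_defect m r g h)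
    + cocycle_defect m (fun x => r x - a x) g h + cocycle_defect m a g h.
  by rewrite defectB; ring.
apply: rpredD; [apply: rpredD|].
- exact: defect_level.
- by apply: dvdz_defect; exact: residue_cong.
- exact: da.
Qed.

Lemma coboundary_loc_const (H : set G) (Q N : nat) (b : int) :
  loc_const_on H (eqmod Q) (coboundary N b).
Proof.
have [_ _ theta_cont] := theta_or.
move=> g _; have [U [oU Ug theta_U]] := theta_cont N g.
by exists U; split=> // x Ux _; rewrite /coboundary theta_U //; exact: eqmod_refl.
Qed.

End CocycleDefect.

Section Lifting.
Variables (p : nat) (G : profinite_group) (theta : G -> nat -> nat) (H : set G).
Hypotheses (p_prime : prime p) (theta_or : p_orientation p theta)
  (h90 : formal_hilbert90 p theta) (H_open : open_subgroup H).

Local Notation defect := (cocycle_defect theta).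

Let p_gt0 : (0 < p)%N := prime_gt0 p_prime.

Let pz_neq0 : p%:Z != 0. Proof. by rewrite eqz_nat -lt0n. Qed.

Let H_mul (x y : G) : H x -> H y -> H (pg_mul x y).
Proof. by case: H_open => _ _ + _; apply. Qed.

Lemma hilbert90_lift (N : nat) (u : G -> int) : (1 <= N)%N ->
  Z1_mod p theta H 1 u -> exists v b, Z1_mod p theta H N v /\
    forall g, H g -> (p%:Z %| u g - v g + coboundary theta N b g)%Z.
Proof.
move=> N_gt0 u_Z1; have [v [v_Z1 [b v_u]]] := h90 H_open N_gt0 u_Z1.
exists v, b; split=> // g Hg; have := v_u g Hg; rewrite eqmodE => p_vu.
have -> : u g - v g + coboundary theta N b g =
    - (v g - (u g + ((theta g 1)%:Z * b - b)))
    + ((theta g N)%:Z - (theta g 1)%:Z) * b by rewrite /coboundary; ring.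
apply: rpredD; first by rewrite rpredN.
by apply: dvdz_mulr; rewrite -(expn1 p); apply: (theta_cong theta_or).
Qed.

Lemma defect_Z1_mod_p (k : nat) (Z : G -> G -> int) (u : G -> int) :
  loc_const_on H (eqmod (p ^ k.+2)) u ->
  (forall g h, H g -> H h ->
     ((p ^ k.+2)%:Z %| defect k.+2 u g h - (p ^ k.+1)%:Z * Z g h)%Z) ->
  Z1_mod p theta H 1 u.
Proof.
move=> lu du; apply/Z1_modE; split.
  by apply: loc_const_impl lu => x y _ _; rewrite !eqmodE; exact: dvdz_pexpW.
move=> g h Hg Hh; rewrite -(expn1 p).
have -> : defect 1 u g h = - (defect k.+2 u g h - defect 1 u g h)
    + (defect k.+2 u g h - (p ^ k.+1)%:Z * Z g h) + (p ^ k.+1)%:Z * Z g h.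
  by ring.
apply: rpredD; [apply: rpredD|].
- by rewrite rpredN; apply: (defect_level theta_or).
- exact: dvdz_pexpW (du g h Hg Hh).
- by apply: dvdz_mulr; exact: dvdz_pexp.
Qed.

Lemma defect_descent_step (k : nat) (Z : G -> G -> int) (u : G -> int) :
  loc_const_on H (eqmod (p ^ k.+2)) u ->
  (forall g h, H g -> H h ->
     ((p ^ k.+2)%:Z %| defect k.+2 u g h - (p ^ k.+1)%:Z * Z g h)%Z) ->
  exists u1, loc_const_on H (eqmod (p ^ k.+1)) u1 /\
    forall g h, H g -> H h ->
      ((p ^ k.+1)%:Z %| defect k.+1 u1 g h - (p ^ k)%:Z * Z g h)%Z.
Proof.
move=> lu du.
have [v [b [/Z1_modE[lv dv] p_w]]] :=
  hilbert90_lift (isT : 0 < k.+2)%N (defect_Z1_mod_p lu du).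
pose w g := u g - v g + coboundary theta k.+2 b g.
pose u1 g := (w g %/ p)%Z.
have w_u1 g : H g -> w g = p%:Z * u1 g by move=> Hg; rewrite mulrC divzK ?p_w.
exists u1; split.
  have lw : loc_const_on H (eqmod (p ^ k.+2)) w.
    apply: (@loc_const2 _ _ _ +%R); first exact: eqmodD.
      by apply: (@loc_const2 _ _ _ (fun x y => x - y)) lu lv; exact: eqmodB.
    exact: (coboundary_loc_const theta_or).
  by apply: loc_const_impl lw => x y Hx Hy; rewrite !w_u1 // expnS eqmod_scale.
move=> g h Hg Hh; have Hgh := H_mul Hg Hh.
have u1_defect : ((p ^ k.+1)%:Z %| defect k.+2 u1 g h - (p ^ k)%:Z * Z g h)%Z.
  rewrite -(dvdz_mul2l pz_neq0) -PoszM -expnS mulrBr mulrA -PoszM -expnS.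
  have -> : p%:Z * defect k.+2 u1 g h = defect k.+2 w g h.
    by rewrite /cocycle_defect !w_u1 //; ring.
  rewrite /w defectD defectB.
  have -> : defect k.+2 u g h - defect k.+2 v g h
      + defect k.+2 (coboundary theta k.+2 b) g h - (p ^ k.+1)%:Z * Z g h
    = (defect k.+2 u g h - (p ^ k.+1)%:Z * Z g h) - defect k.+2 v g h
      + defect k.+2 (coboundary theta k.+2 b) g h by ring.
  apply: rpredD; [apply: rpredB|].
  - exact: du.
  - exact: dv.
  - by apply: (defect_coboundary theta_or).
have -> : defect k.+1 u1 g h - (p ^ k)%:Z * Z g h =
    - (defect k.+2 u1 g h - defect k.+1 u1 g h)
    + (defect k.+2 u1 g h - (p ^ k)%:Z * Z g h) by ring.
by apply: rpredD => //; rewrite rpredN; apply: (defect_level theta_or).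
Qed.

Lemma defect_descent (k : nat) (Z : G -> G -> int) (u : G -> int) :
  loc_const_on H (eqmod (p ^ k.+1)) u ->
  (forall g h, H g -> H h ->
     ((p ^ k.+1)%:Z %| defect k.+1 u g h - (p ^ k)%:Z * Z g h)%Z) ->
  exists b, loc_const_on H (eqmod p) b /\
    forall g h, H g -> H h -> (p%:Z %| defect 1 b g h - Z g h)%Z.
Proof.
elim: k u => [|k IHk] u lu du.
  exists u; split; first by rewrite -(expn1 p).
  by move=> g h Hg Hh; move: (du g h Hg Hh); rewrite expn1 expn0 mul1r.
have [u1 [lu1 du1]] := defect_descent_step lu du.
exact: IHk lu1 du1.
Qed.

Lemma Z1_mod_lift (m : nat) (a : G -> int) : Z1_mod p theta H m a ->
  exists a', Z1_mod p theta H m.+1 a' /\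
    forall g, H g -> ((p ^ m)%:Z %| a' g - a g)%Z.
Proof.
move=> /Z1_modE[la da]; set P := (p ^ m)%N.
have P_neq0 : P%:Z != 0 by rewrite eqz_nat -lt0n expn_gt0 p_gt0.
pose r := residue P a.
have r_defect g h : H g -> H h -> (P%:Z %| defect m.+1 r g h)%Z.
  exact: (residue_defect theta_or da).
pose Z g h := (defect m.+1 r g h %/ P%:Z)%Z.
have r_Z g h : H g -> H h -> defect m.+1 r g h = P%:Z * Z g h.
  by move=> Hg Hh; rewrite mulrC divzK ?r_defect.
have [b [lb db]] : exists b, loc_const_on H (eqmod p) b /\
    forall g h, H g -> H h -> (p%:Z %| defect 1 b g h - Z g h)%Z.
  apply: (defect_descent (k := m) (residue_loc_const _ la)) => g h Hg Hh.
  by rewrite r_Z // subrr dvdz0.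
exists (fun g => r g - P%:Z * b g); split.
  apply/Z1_modE; split.
    apply: (@loc_const2 _ _ _ (fun x y => x - y)) (residue_loc_const _ la) _.
      exact: eqmodB.
    by apply: loc_const_impl lb => x y _ _; rewrite expnSr eqmod_scale ?expn_gt0 ?p_gt0.
  move=> g h Hg Hh; rewrite defectB defectMl r_Z // -mulrBr expnSr PoszM.
  rewrite dvdz_mul2l //.
  have -> : Z g h - defect m.+1 b g h =
      - (defect 1 b g h - Z g h) - (defect m.+1 b g h - defect 1 b g h) by ring.
  apply: rpredB; first by rewrite rpredN; exact: db.
  by rewrite -(expn1 p); apply: (defect_level theta_or).
move=> g Hg.
have -> : r g - P%:Z * b g - a g = (r g - a g) - P%:Z * b g by ring.
by apply: rpredB; [exact: residue_cong | exact: dvdz_mulr].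
Qed.

End Lifting.

Unset Implicit Arguments.

Theorem lemma2p3 (p : nat) (G : profinite_group) (theta : G -> nat -> nat) :
  prime p -> p_orientation p theta -> formal_hilbert90 p theta ->
  forall (H : set G) (n : nat), open_subgroup H -> (1 <= n)%N ->
  (* Z^1(H, S[p^n]) -> Z^1(H, S[p^(n-1)]), x |-> p x, is surjective *)
  (forall c, Z1_S p theta H n.-1 c ->
     exists c', Z1_S p theta H n c' /\
       forall g, H g -> eqS (p%:R * c' g) (c g)) /\
  (* H^1(H, S[p^n]) -> H^1(H, S[p^(n-1)]), x |-> p x, is surjective *)
  (forall c, Z1_S p theta H n.-1 c ->
     exists c', Z1_S p theta H n c' /\
       exists b : rat, in_S_tors p n.-1 b /\
         forall g, H g ->
           eqS (p%:R * c' g) (c g + ((theta g n.-1)%:R * b - b))).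
Proof.
move=> p_prime theta_or h90 H [//|m] H_open _ /=.
have p_gt0 := prime_gt0 p_prime.
have H_mul x y : H x -> H y -> H (pg_mul x y) by case: H_open => _ _ + _; apply.
suff Z1_surj c : Z1_S p theta H m c -> exists c', Z1_S p theta H m.+1 c' /\
    forall g, H g -> eqS (p%:R * c' g) (c g).
  split=> // c /Z1_surj[c' [c'_Z1 c'_c]]; exists c'; split=> //.
  exists 0; split=> [|g Hg]; first by rewrite /in_S_tors mulr0.
  by rewrite mulr0 subrr addr0; exact: c'_c.
move=> c_Z1; pose a g := numq ((p ^ m)%:R * c g).
have c_a g : H g -> c g = (a g)%:~R / (p ^ m)%:R.
  by move=> Hg; apply: S_tors_frac => //; case: c_Z1 => + _ _; apply.
have [a' [a'_Z1 a'_a]] := Z1_mod_lift p_prime theta_or h90 H_open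
  ((Z1_S_frac theta p_gt0 H_mul c_a).1 c_Z1).
exists (fun g => (a' g)%:~R / (p ^ m.+1)%:R); split.
  exact/(Z1_S_frac theta p_gt0 H_mul).
move=> g Hg; rewrite c_a //.
have -> : p%:R * ((a' g)%:~R / (p ^ m.+1)%:R) = (a' g)%:~R / (p ^ m)%:R :> rat.
  have p_neq0 : (p%:R : rat) != 0 by rewrite pnatr_eq0 -lt0n.
  by rewrite expnS natrM invfM mulrCA mulVKf.
by apply/eqS_frac; rewrite ?expn_gt0 ?p_gt0 // eqmodE; exact: a'_a.
Qed.
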